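(* For any locale $L$, its DeMorganization (the largest dense extremally disconnected sublocale of $L$) is a fitted sublocale of $L$.
   Context: A frame (locale) $L$ is a complete lattice in which finite meets distribute over arbitrary joins; $a\to b$ denotes the Heyting implication and $a^*=a\to0$ the pseudocomplement. A sublocale of $L$ is a subset $S\subseteq L$ closed under arbitrary meets such that $a\to s\in S$ for all $a\in L$, $s\in S$; it is a frame under the inherited order. A sublocale $S$ is dense if $\bigwedge S=0$. A frame is extremally disconnected if $x^*\vee x^{**}=1$ for all its elements. The open sublocale of $a\in L$ is $\mathfrak{o}(a)=\{a\to b\mid b\in L\}$. A sublocale is fitted if it is an intersection of a family of open sublocales. *)

Set Implicit Arguments.

Record Frame := {
  carrier :> Type;
  le : carrier -> carrier -> Prop;
  sup : (carrier -> Prop) -> carrier;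
  meet : carrier -> carrier -> carrier;
  le_refl : forall x, le x x;
  le_trans : forall x y z, le x y -> le y z -> le x z;
  le_antisym : forall x y, le x y -> le y x -> x = y;
  sup_ub : forall (A : carrier -> Prop) a, A a -> le a (sup A);
  sup_least : forall (A : carrier -> Prop) u,
      (forall a, A a -> le a u) -> le (sup A) u;
  meet_glb : forall x a b, le x (meet a b) <-> (le x a /\ le x b);
  meet_sup_distr : forall a (A : carrier -> Prop),
      meet a (sup A) = sup (fun y => exists s, A s /\ y = meet a s)
}.

Arguments le {f} _ _.
Arguments sup {f} _.
Arguments meet {f} _ _.

Section FrameOps.
Variable L : Frame.

Definition inf (A : L -> Prop) : L :=
  sup (fun x => forall a, A a -> le x a).
Definition top : L := sup (fun _ => True).
Definition bot : L := sup (fun _ => False).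
Definition imp (a b : L) : L := sup (fun x => le (meet x a) b).
Definition pc (a : L) : L := imp a bot.

Definition sublocale (S : L -> Prop) : Prop :=
  (forall A : L -> Prop, (forall a, A a -> S a) -> S (inf A)) /\
  (forall a s, S s -> S (imp a s)).

(* Frame operations of the sublocale S under the inherited order.
   Joins in S: the least element of S above all elements of A
   (which exists since S is closed under meets). *)
Definition sub_sup (S : L -> Prop) (A : L -> Prop) : L :=
  inf (fun u => S u /\ forall a, A a -> le a u).
Definition sub_join (S : L -> Prop) (a b : L) : L :=
  sub_sup S (fun x => x = a \/ x = b).
Definition sub_top (S : L -> Prop) : L := sub_sup S S.
Definition sub_bot (S : L -> Prop) : L := sub_sup S (fun _ => False).
Definition sub_meet (S : L -> Prop) (a b : L) : L := meet a b.
Definition sub_imp (S : L -> Prop) (a b : L) : L :=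
  sub_sup S (fun y => S y /\ le (sub_meet S y a) b).
Definition sub_pc (S : L -> Prop) (a : L) : L := sub_imp S a (sub_bot S).

Definition dense (S : L -> Prop) : Prop := inf S = bot.

Definition extremally_disconnected_sub (S : L -> Prop) : Prop :=
  forall x, S x ->
    sub_join S (sub_pc S x) (sub_pc S (sub_pc S x)) = sub_top S.

Definition dense_ED_sublocale (S : L -> Prop) : Prop :=
  sublocale S /\ dense S /\ extremally_disconnected_sub S.

Definition DeMorganization (S : L -> Prop) : Prop :=
  dense_ED_sublocale S /\
  (forall T, dense_ED_sublocale T -> forall x, T x -> S x).

Definition open_sub (a : L) : L -> Prop := fun x => exists b, x = imp a b.

Definition fitted (S : L -> Prop) : Prop :=
  exists F : L -> Prop, forall x, S x <-> (forall a, F a -> open_sub a x).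

End FrameOps.

Arguments inf {L} _.
Arguments top {L}.
Arguments bot {L}.
Arguments imp {L} _ _.
Arguments pc {L} _.
Arguments sublocale {L} _.
Arguments sub_sup {L} _ _.
Arguments sub_join {L} _ _ _.
Arguments sub_top {L} _.
Arguments sub_bot {L} _.
Arguments sub_meet {L} _ _ _.
Arguments sub_imp {L} _ _ _.
Arguments sub_pc {L} _ _.
Arguments dense {L} _.
Arguments extremally_disconnected_sub {L} _.
Arguments dense_ED_sublocale {L} _.
Arguments DeMorganization {L} _.
Arguments open_sub {L} _ _.
Arguments fitted {L} _.


(* Write c_a := a* \/ a**.  If T is a dense extremally disconnected sublocale
   and t is in T, then (c_a -> t) -> t lies in T and dominates a** and
   a*** = a*; extremal disconnectedness of T at a* forces it to be 1, i.e.
   c_a -> t = t.  So T is contained in the intersection N of the open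
   sublocales o(c_a).  Conversely N is a dense sublocale, and any element of N
   above x* \/ x** equals x* \/ x** -> itself = 1, so N is extremally
   disconnected.  Hence N is the DeMorganization, and it is fitted. *)

Section FrameFacts.
Context {L : Frame}.
Implicit Types a b c x y : L.

Lemma meet_lel a b : le (meet a b) a.
Proof. exact (proj1 (proj1 (meet_glb L _ a b) (le_refl L _))). Qed.

Lemma meet_ler a b : le (meet a b) b.
Proof. exact (proj2 (proj1 (meet_glb L _ a b) (le_refl L _))). Qed.

Lemma le_meet x a b : le x a -> le x b -> le x (meet a b).
Proof. intros Ha Hb. apply meet_glb. split; assumption. Qed.

Lemma meet_mono_l x y a : le x y -> le (meet x a) (meet y a).
Proof.
  intros Hxy. apply le_meet; [eapply le_trans; [apply meet_lel | exact Hxy] | apply meet_ler].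
Qed.

Lemma inf_lb (A : L -> Prop) a : A a -> le (inf A) a.
Proof. intros Ha. apply sup_least. intros x Hx. exact (Hx a Ha). Qed.

Lemma inf_glb (A : L -> Prop) x : (forall a, A a -> le x a) -> le x (inf A).
Proof. intros H. apply (sup_ub L (fun x => forall a, A a -> le x a)). exact H. Qed.

Lemma bot_le x : le bot x.
Proof. apply sup_least. intros a []. Qed.

Lemma le_top x : le x top.
Proof. apply (sup_ub L (fun _ => True)). exact I. Qed.

Lemma inf_empty : inf (fun _ : L => False) = top.
Proof. apply le_antisym; [apply le_top | apply inf_glb; intros _ []]. Qed.

Lemma le_imp x a b : le x (imp a b) <-> le (meet x a) b.
Proof.
  split; intros H.
  - apply le_trans with (meet (imp a b) a); [now apply meet_mono_l |].
    apply le_trans with (meet a (imp a b)); [apply le_meet; [apply meet_ler | apply meet_lel] |].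
    unfold imp. rewrite meet_sup_distr. apply sup_least.
    intros y [s [Hs ->]].
    eapply le_trans; [| exact Hs]. apply le_meet; [apply meet_ler | apply meet_lel].
  - apply (sup_ub L (fun x => le (meet x a) b)). exact H.
Qed.

Lemma imp_elim a b : le (meet (imp a b) a) b.
Proof. apply le_imp, le_refl. Qed.

Lemma imp_mono_r a b c : le b c -> le (imp a b) (imp a c).
Proof. intros H. apply le_imp. apply le_trans with b; [apply imp_elim | exact H]. Qed.

Lemma imp_anti_l a b c : le a b -> le (imp b c) (imp a c).
Proof.
  intros H. apply le_imp. eapply le_trans; [| apply imp_elim].
  apply le_meet; [apply meet_lel | eapply le_trans; [apply meet_ler | exact H]].
Qed.

Lemma le_imp_self c x : le x (imp c x).
Proof. apply le_imp, meet_lel. Qed.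

Lemma imp_idem a b : imp a (imp a b) = imp a b.
Proof.
  apply le_antisym; [| apply le_imp_self].
  apply le_imp. apply le_trans with (meet (imp a b) a); [| apply imp_elim].
  apply le_meet; [apply imp_elim | apply meet_ler].
Qed.

Lemma imp_comm a b c : imp a (imp b c) = imp b (imp a c).
Proof.
  assert (swap : forall a b c, le (imp a (imp b c)) (imp b (imp a c))).
  { intros a' b' c'. apply le_imp, le_imp.
    apply le_trans with (meet (imp b' c') b'); [| apply imp_elim].
    apply le_meet; [| eapply le_trans; [apply meet_lel | apply meet_ler]].
    apply le_trans with (meet (imp a' (imp b' c')) a'); [| apply imp_elim].
    apply le_meet; [eapply le_trans; apply meet_lel | apply meet_ler]. }
  apply le_antisym; apply swap.
Qed.

Lemma pc_meet_le_bot a : le (meet (pc a) a) bot.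
Proof. apply imp_elim. Qed.

Lemma le_pcpc a : le a (pc (pc a)).
Proof.
  apply le_imp. eapply le_trans; [| apply (pc_meet_le_bot a)].
  apply le_meet; [apply meet_ler | apply meet_lel].
Qed.

Lemma pc3_le a : le (pc (pc (pc a))) (pc a).
Proof. apply imp_anti_l, le_pcpc. Qed.

Lemma open_subP a x : open_sub a x <-> imp a x = x.
Proof.
  split.
  - intros [b ->]. apply imp_idem.
  - intros H. exists x. now symmetry.
Qed.

End FrameFacts.

Section SublocaleFacts.
Context {L : Frame} {T : L -> Prop}.
Hypothesis T_sub : sublocale T.

Lemma sublocale_top : T top.
Proof. rewrite <- inf_empty. apply (proj1 T_sub). intros _ []. Qed.

Lemma sublocale_imp a s : T s -> T (imp a s).
Proof. apply (proj2 T_sub). Qed.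

Lemma sub_join_le a b u : T u -> le a u -> le b u -> le (sub_join T a b) u.
Proof. intros Hu Ha Hb. apply inf_lb. split; [exact Hu | now intros y [-> | ->]]. Qed.

Lemma sub_top_eq : sub_top T = top.
Proof.
  apply le_antisym; [apply le_top |].
  apply inf_glb. intros u [_ Hu]. apply Hu, sublocale_top.
Qed.

Hypothesis T_dense : dense T.

Lemma dense_sublocale_bot : T bot.
Proof. rewrite <- T_dense. now apply (proj1 T_sub). Qed.

Lemma sub_pc_eq x : sub_pc T x = pc x.
Proof.
  assert (T_pc : T (pc x)) by apply sublocale_imp, dense_sublocale_bot.
  assert (sub_bot_eq : sub_bot T = bot).
  { apply le_antisym; [| apply bot_le].
    apply inf_lb. split; [apply dense_sublocale_bot | intros _ []]. }
  unfold sub_pc, sub_imp, sub_meet. rewrite sub_bot_eq.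
  apply le_antisym.
  - apply inf_lb. split; [exact T_pc |]. intros y [_ Hy]. now apply le_imp.
  - apply inf_glb. intros u [_ Hu]. apply Hu. split; [exact T_pc | apply pc_meet_le_bot].
Qed.

End SublocaleFacts.

Lemma dense_ED_top {L : Frame} {T : L -> Prop} (y u : L) :
  dense_ED_sublocale T -> T y -> T u ->
  le (pc y) u -> le (pc (pc y)) u -> u = top.
Proof.
  intros [T_sub [T_dense T_ED]] Ty Tu Hu1 Hu2.
  pose proof (T_ED y Ty) as E.
  rewrite !(sub_pc_eq T_sub T_dense), (sub_top_eq T_sub) in E.
  apply le_antisym; [apply le_top |].
  rewrite <- E. now apply sub_join_le.
Qed.

Section DeMorganization.
Variable L : Frame.

Definition join2 (a b : L) : L := sup (fun x => x = a \/ x = b).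

Definition pcjoin (a : L) : L := join2 (pc a) (pc (pc a)).

Definition pcjoin_fixed (x : L) : Prop := forall a, imp (pcjoin a) x = x.

Lemma pc_le_pcjoin a : le (pc a) (pcjoin a).
Proof. apply (sup_ub L (fun x => x = pc a \/ x = pc (pc a))). now left. Qed.

Lemma pcpc_le_pcjoin a : le (pc (pc a)) (pcjoin a).
Proof. apply (sup_ub L (fun x => x = pc a \/ x = pc (pc a))). now right. Qed.

Lemma dense_ED_sub_pcjoin_fixed (T : L -> Prop) t :
  dense_ED_sublocale T -> T t -> pcjoin_fixed t.
Proof.
  intros T_DED Tt a.
  pose proof T_DED as [T_sub [T_dense _]].
  set (c := pcjoin a).
  set (w := imp (imp c t) t).
  assert (c_le_w : le c w).
  { apply le_imp. eapply le_trans; [| apply imp_elim].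
    apply le_meet; [apply meet_ler | apply meet_lel]. }
  assert (w_top : w = top).
  { apply (dense_ED_top (pc a) w T_DED).
    - apply (sublocale_imp T_sub), (dense_sublocale_bot T_sub T_dense).
    - now apply (sublocale_imp T_sub).
    - eapply le_trans; [apply pcpc_le_pcjoin | exact c_le_w].
    - eapply le_trans; [apply pc3_le |].
      eapply le_trans; [apply pc_le_pcjoin | exact c_le_w]. }
  apply le_antisym; [| apply le_imp_self].
  apply le_trans with (meet top (imp c t)); [apply le_meet; [apply le_top | apply le_refl] |].
  apply le_imp. rewrite <- w_top. apply le_refl.
Qed.

Lemma pcjoin_fixed_sublocale : sublocale pcjoin_fixed.
Proof.
  split.
  - intros A HA a. apply le_antisym; [| apply le_imp_self].
    apply inf_glb. intros z Hz. rewrite <- (HA z Hz a).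
    now apply imp_mono_r, inf_lb.
  - intros b s Hs a. now rewrite imp_comm, Hs.
Qed.

Lemma pcjoin_fixed_bot : pcjoin_fixed bot.
Proof.
  intros a. apply le_antisym; [| apply bot_le].
  eapply le_trans; [| apply (pc_meet_le_bot (pc a))].
  apply le_meet.
  - apply imp_anti_l, pc_le_pcjoin.
  - eapply le_trans; [apply imp_anti_l, pcpc_le_pcjoin | apply pc3_le].
Qed.

Lemma pcjoin_fixed_dense : dense pcjoin_fixed.
Proof. apply le_antisym; [apply inf_lb, pcjoin_fixed_bot | apply bot_le]. Qed.

Lemma pcjoin_fixed_ED : extremally_disconnected_sub pcjoin_fixed.
Proof.
  intros x _.
  rewrite !(sub_pc_eq pcjoin_fixed_sublocale pcjoin_fixed_dense).
  rewrite (sub_top_eq pcjoin_fixed_sublocale).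
  apply le_antisym; [apply le_top |].
  apply inf_glb. intros u [Hu Hub].
  rewrite <- (Hu x). apply le_imp.
  eapply le_trans; [apply meet_ler |].
  apply sup_least. exact Hub.
Qed.

Lemma DeMorganization_pcjoin_fixed : DeMorganization pcjoin_fixed.
Proof.
  split.
  - exact (conj pcjoin_fixed_sublocale (conj pcjoin_fixed_dense pcjoin_fixed_ED)).
  - intros T T_DED x Tx. exact (dense_ED_sub_pcjoin_fixed T x T_DED Tx).
Qed.

Lemma pcjoin_fixed_fitted : fitted pcjoin_fixed.
Proof.
  exists (fun e => exists a, e = pcjoin a).
  intros x. split.
  - intros Hx e [a ->]. apply open_subP, Hx.
  - intros H a. apply open_subP, H. now exists a.
Qed.

End DeMorganization.

Theorem corollary4p3 (L : Frame) (S : L -> Prop) :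
  DeMorganization S -> fitted S.
Proof.
  intros [S_DED S_max].
  destruct (DeMorganization_pcjoin_fixed L) as [N_DED N_max].
  destruct (pcjoin_fixed_fitted L) as [F HF].
  exists F. intros x. split.
  - intros Sx. apply HF, (N_max S S_DED x Sx).
  - intros Fx. apply (S_max _ N_DED), HF, Fx.
Qed.
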